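(* For every $q\in K(\!(\mathbf{t})\!)^\circ$ there exist an integer $n\ge1$ and elements $\alpha_1,\dots,\alpha_n\in K$ such that $\operatorname{trop}\big(\prod_{k=1}^n(q-\alpha_k)\big)\ll 1$.
   Context: $K$ is a field of characteristic zero, $\mathbf{t}=(t_1,\dots,t_m)$, $K(\!(\mathbf{t})\!)=\operatorname{Frac}K[\![\mathbf{t}]\!]$. $V\mathbb{B}[\mathbf{t}]$ is the semiring of subsets of $\mathbb{N}^m$ equal to the vertex set of their Newton polyhedron $\operatorname{conv}(\cdot)+\mathbb{R}^m_{\ge0}$, with $a\oplus b$ = vertices of the Newton polyhedron of $a\cup b$, $a\odot b$ = vertices of that of $a+b$; order $a\le b$ iff $a\oplus b=b$. $V\mathbb{B}(\mathbf{t})$ is its fraction semifield, ordered by $a/b\le c/d$ iff $a\odot d\le b\odot c$. $\operatorname{trop}(f)$ is the vertex set of the Newton polyhedron of $\operatorname{Supp}(f)$, $\operatorname{trop}(f/g)=\operatorname{trop}(f)/\operatorname{trop}(g)$, $K(\!(\mathbf{t})\!)^\circ=\{q:\operatorname{trop}(q)\le1\}$. For $a\le b$ in $V\mathbb{B}[\mathbf{t}]$, $a\ll b$ means $a\cap b=\emptyset$; for $\frac ab\le\frac cd$ in $V\mathbb{B}(\mathbf{t})$, $\frac ab\ll\frac cd$ means $a\odot d\ll c\odot b$. *)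

From HB Require Import structures.
From mathcomp Require Import all_boot all_order all_algebra.
From mathcomp Require Import Rstruct.
From Stdlib Require Import Rdefinitions.

Set Implicit Arguments.
Unset Strict Implicit.
Unset Printing Implicit Defensive.
Import Order.TTheory GRing.Theory Num.Theory.
Local Open Scope ring_scope.

Definition mexp (m : nat) := {ffun 'I_m -> nat}.
Definition mexp0 (m : nat) : mexp m := [ffun => 0%N].

(* Formal power series K[[t_1,...,t_m]]: arbitrary coefficient functions. *)
Definition pseries (K : fieldType) (m : nat) := mexp m -> K.

Section PowerSeries.
Variables (K : fieldType) (m : nat).

(* Cauchy product: (fg)_a = sum_{b <= a} f_b g_{a-b}; b ranges over all
   componentwise-bounded exponent vectors, each exactly once. *)
Definition ps_mul (f g : pseries K m) : pseries K m := fun a =>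
  \sum_(b : {ffun 'I_m -> 'I_((\max_(i < m) a i).+1)} | [forall i, leq (nat_of_ord (b i)) (a i)])
     f [ffun i => nat_of_ord (b i)] * g [ffun i => subn (a i) (nat_of_ord (b i))].

Definition ps_one : pseries K m := fun a => if a == mexp0 m then 1 else 0.

Definition ps_prod (s : seq (pseries K m)) : pseries K m := foldr ps_mul ps_one s.

Definition ps_subsc (f g : pseries K m) (c : K) : pseries K m :=
  fun a => f a - c * g a.

Definition Supp (f : pseries K m) : mexp m -> Prop := fun a => f a <> 0.

End PowerSeries.

Section Tropical.
Variable m : nat.

Definition embedR (a : mexp m) : 'I_m -> R := fun i => (a i)%:R.

(* Newton polyhedron conv(S) + R^m_{>=0}, as a subset of R^m. *)
Definition newton (S : mexp m -> Prop) : ('I_m -> R) -> Prop := fun x =>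
  exists (k : nat) (s : 'I_k -> mexp m) (l : 'I_k -> R),
    (forall j, S (s j)) /\ (forall j, 0 <= l j) /\ \sum_(j < k) l j = 1 /\
    forall i, \sum_(j < k) l j * ((s j) i)%:R <= x i.

Definition extreme (P : ('I_m -> R) -> Prop) (v : 'I_m -> R) : Prop :=
  P v /\ forall (x y : 'I_m -> R) (t : R), P x -> P y -> 0 < t < 1 ->
    (forall i, v i = t * x i + (1 - t) * y i) -> forall i, x i = y i.

Definition vert (S : mexp m -> Prop) : mexp m -> Prop :=
  fun a => extreme (newton S) (embedR a).

Definition VBeq (a b : mexp m -> Prop) : Prop := forall x, a x <-> b x.
Definition VBadd (a b : mexp m -> Prop) : mexp m -> Prop :=
  vert (fun x => a x \/ b x).
Definition VBmul (a b : mexp m -> Prop) : mexp m -> Prop :=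
  vert (fun x => exists y z, a y /\ b z /\ x = [ffun i => addn (y i) (z i)]).
Definition VB1 : mexp m -> Prop := fun x => x = mexp0 m.
Definition VBle (a b : mexp m -> Prop) : Prop := VBeq (VBadd a b) b.
Definition VBll (a b : mexp m -> Prop) : Prop :=
  VBle a b /\ forall x, ~ (a x /\ b x).

(* Fraction semifield VB(t): a/b <= c/d and a/b << c/d, on representatives. *)
Definition VBfrac_le (a b c d : mexp m -> Prop) : Prop :=
  VBle (VBmul a d) (VBmul b c).
Definition VBfrac_ll (a b c d : mexp m -> Prop) : Prop :=
  VBfrac_le a b c d /\ VBll (VBmul a d) (VBmul c b).

End Tropical.

Definition trop (K : fieldType) (m : nat) (f : pseries K m) : mexp m -> Prop :=
  vert (Supp f).

(* Write q = f/g.  The hypothesis says that the support of f lies in the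
   Newton polyhedron N(g) of g.  By Dickson's lemma the support of g has
   finitely many minimal elements l_1, ..., l_n, and every vertex of N(g) is
   one of them; take alpha_k = f(l_k)/g(l_k).  Each factor f - alpha_k g is
   supported in N(g), so the supports of P = prod_k (f - alpha_k g) and of g^n
   lie in n N(g).  At n v, for a vertex v of N(g), the only way to write n v as
   a sum of n points of N(g) is v + ... + v, so the coefficients there are
   g(v)^n <> 0 and prod_k (f(v) - alpha_k g(v)) = 0.  Hence N(g^n) = n N(g),
   its vertices are the points n v, and none of them is a vertex of N(P). *)

(* Imported before MathComp: imported after it, [Rdefinitions] would rebind
   the scope key [%N] used in the statement. *)
From Stdlib Require Import Rdefinitions Classical FunctionalExtensionality PropExtensionality.
From HB Require Import structures.
From mathcomp Require Import all_boot all_order all_algebra.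
From mathcomp Require Import Rstruct ring lra.

Set Implicit Arguments.
Unset Strict Implicit.
Unset Printing Implicit Defensive.
Import Order.TTheory GRing.Theory Num.Theory.
Local Open Scope ring_scope.

Lemma pred_ext (T : Type) (A B : T -> Prop) : (forall x, A x <-> B x) -> A = B.
Proof.
move=> eqAB; apply: functional_extensionality => x.
exact: propositional_extensionality.
Qed.

(* For [c > 0] this is [c] times the Newton polyhedron of [S]; for [c = 0] it
   is the nonnegative orthant.  [newton S] unfolds to [scaled_newton S 1]. *)
Definition scaled_newton {m} (S : mexp m -> Prop) (c : R) (x : 'I_m -> R) : Prop :=
  exists (k : nat) (s : 'I_k -> mexp m) (l : 'I_k -> R),
    (forall j, S (s j)) /\ (forall j, 0 <= l j) /\ \sum_(j < k) l j = c /\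
    forall i, \sum_(j < k) l j * ((s j) i)%:R <= x i.
Arguments scaled_newton {m} S c%_ring_scope x.

Section ScaledNewton.
Variable m : nat.
Implicit Types (S T : mexp m -> Prop) (a s : mexp m) (c t : R) (x y p v : 'I_m -> R).

Lemma scaled_newton_le S c x y :
  scaled_newton S c x -> (forall i, x i <= y i) -> scaled_newton S c y.
Proof.
move=> [k [s [l [Ss [l_ge0 [l_sum le_x]]]]]] le_xy; exists k, s, l.
by do 3 split=> //; move=> i; apply: le_trans (le_x i) (le_xy i).
Qed.

Lemma scaled_newton_eq S c c' x y :
  scaled_newton S c x -> c = c' -> (forall i, x i = y i) -> scaled_newton S c' y.
Proof. by move=> Nx <- Exy; apply: scaled_newton_le Nx _ => i; rewrite Exy. Qed.

Lemma scaled_newton_sub S T c x :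
  (forall a, S a -> T a) -> scaled_newton S c x -> scaled_newton T c x.
Proof.
move=> sST [k [s [l [Ss Hl]]]]; exists k, s, l.
by split=> // j; apply: sST.
Qed.

Lemma scaled_newton_ge0 S c x : scaled_newton S c x -> forall i, 0 <= x i.
Proof.
move=> [k [s [l [_ [l_ge0 [_ le_x]]]]]] i; apply: le_trans (le_x i).
by apply: sumr_ge0 => j _; apply: mulr_ge0.
Qed.

Lemma scaled_newton_weight_ge0 S c x : scaled_newton S c x -> 0 <= c.
Proof. by move=> [k [s [l [_ [l_ge0 [<- _]]]]]]; apply: sumr_ge0. Qed.

Lemma scaled_newton_orthant S x : (forall i, 0 <= x i) -> scaled_newton S 0 x.
Proof.
move=> x_ge0; exists 0%N, (fun _ => mexp0 m), (fun _ => 0).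
split; first by case.
by do !split; [|rewrite big_ord0|move=> i; rewrite big_ord0].
Qed.

Lemma newton_point S s : S s -> newton S (embedR s).
Proof.
move=> Ss; exists 1%N, (fun _ => s), (fun _ => 1).
do 3 split=> //; first by rewrite big_ord1.
by move=> i; rewrite big_ord1 mul1r.
Qed.

Lemma scaled_newton_add S c1 c2 x1 x2 :
  scaled_newton S c1 x1 -> scaled_newton S c2 x2 ->
  scaled_newton S (c1 + c2) (fun i => x1 i + x2 i).
Proof.
move=> [k1 [s1 [l1 [Ss1 [l1_ge0 [l1_sum le_x1]]]]]].
move=> [k2 [s2 [l2 [Ss2 [l2_ge0 [l2_sum le_x2]]]]]].
pose glue A (u : 'I_k1 -> A) (w : 'I_k2 -> A) j :=
  match split j with inl j1 => u j1 | inr j2 => w j2 end.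
have glueL A u w j : glue A u w (lshift k2 j) = u j by rewrite /glue (unsplitK (inl j)).
have glueR A u w j : glue A u w (rshift k1 j) = w j by rewrite /glue (unsplitK (inr j)).
exists (k1 + k2)%N, (glue _ s1 s2), (glue _ l1 l2).
split; first by move=> j; rewrite /glue; case: (split j).
split; first by move=> j; rewrite /glue; case: (split j).
split; first by rewrite big_split_ord -l1_sum -l2_sum; congr (_ + _);
  apply: eq_bigr => j _; rewrite ?glueL ?glueR.
move=> i; rewrite big_split_ord; apply: lerD.
  by apply: le_trans (le_x1 i); under eq_bigr do rewrite !glueL.
by apply: le_trans (le_x2 i); under eq_bigr do rewrite !glueR.
Qed.

Lemma scaled_newton_scale S t c x :
  0 <= t -> scaled_newton S c x -> scaled_newton S (t * c) (fun i => t * x i).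
Proof.
move=> t_ge0 [k [s [l [Ss [l_ge0 [l_sum le_x]]]]]].
exists k, s, (fun j => t * l j).
do !split=> //; first by move=> j; apply: mulr_ge0.
  by rewrite -mulr_sumr l_sum.
move=> i; apply: le_trans (ler_wpM2l t_ge0 (le_x i)).
by rewrite mulr_sumr (eq_bigr _ (fun j _ => mulrA _ _ _)).
Qed.

Lemma scaled_newton_div S c x :
  0 < c -> scaled_newton S c x -> newton S (fun i => c^-1 * x i).
Proof.
move=> c_gt0 Nx; have c'_ge0 : 0 <= c^-1 by rewrite invr_ge0 ltW.
by have := scaled_newton_scale c'_ge0 Nx; rewrite mulVf ?gt_eqF.
Qed.

Lemma scaled_newton_sum S k (p : 'I_k -> 'I_m -> R) (w : 'I_k -> R) :
  (forall j, 0 <= w j) -> (forall j, w j != 0 -> newton S (p j)) ->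
  scaled_newton S (\sum_(j < k) w j) (fun i => \sum_(j < k) w j * p j i).
Proof.
elim: k p w => [|k IHk] p w w_ge0 Np.
  have N0 : scaled_newton S 0 (fun=> 0) by apply: scaled_newton_orthant.
  by apply: scaled_newton_eq N0 _ _ => [|i]; rewrite big_ord0.
have Nlast : scaled_newton S (w ord_max) (fun i => w ord_max * p ord_max i).
  have [->|w_neq0] := eqVneq (w ord_max) 0.
    by apply: scaled_newton_orthant => i; rewrite mul0r.
  by apply: scaled_newton_eq (scaled_newton_scale (w_ge0 _) (Np _ w_neq0)) _ _;
    rewrite ?mulr1.
pose lift_max j := widen_ord (leqnSn k) j.
have Ninit := IHk (p \o lift_max) (w \o lift_max) (fun j => w_ge0 _) (fun j => Np _).
by apply: scaled_newton_eq (scaled_newton_add Ninit Nlast) _ _ => [|i];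
  rewrite big_ord_recr.
Qed.

Lemma scaled_newton_closure S T c x :
  (forall a, T a -> newton S (embedR a)) -> scaled_newton T c x ->
  scaled_newton S c x.
Proof.
move=> NT [k [s [l [Ts [l_ge0 [<- le_x]]]]]].
exact: scaled_newton_le (scaled_newton_sum l_ge0 (fun j _ => NT _ (Ts j))) le_x.
Qed.

Lemma newton_convex S x y t :
  newton S x -> newton S y -> 0 <= t <= 1 ->
  newton S (fun i => t * x i + (1 - t) * y i).
Proof.
move=> Nx Ny /andP[t_ge0 t_le1]; have t'_ge0 : 0 <= 1 - t by rewrite subr_ge0.
have := scaled_newton_add (scaled_newton_scale t_ge0 Nx) (scaled_newton_scale t'_ge0 Ny).
by move/scaled_newton_eq; apply; rewrite // !mulr1 addrC subrK.
Qed.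

Lemma scaled_newton_absorb S mu (u w : 'I_m -> R) : mu < 1 ->
  scaled_newton S (1 - mu) w -> (forall i, mu * u i + w i <= u i) -> newton S u.
Proof.
move=> mu_lt1 Nw le_u; have mu'_gt0 : 0 < 1 - mu by rewrite subr_gt0.
apply: scaled_newton_le (scaled_newton_div mu'_gt0 Nw) _ => i.
by rewrite -(ler_pM2l mu'_gt0) mulrA mulfV ?gt_eqF // mul1r; have := le_u i; lra.
Qed.

End ScaledNewton.

Section ExtremePoints.
Variable m : nat.
Implicit Types (S : mexp m -> Prop) (a s : mexp m) (c t : R) (x y p v z : 'I_m -> R).

Lemma embedR_inj a b : embedR a =1 embedR b -> a = b.
Proof.
move=> eq_ab; apply/ffunP => i; apply/eqP.
by rewrite -(eqr_nat R) -!/(embedR _ i) eq_ab.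
Qed.

Lemma scaled_newton_split_at S k (s : 'I_k -> mexp m) (l : 'I_k -> R) a :
  (forall j, S (s j)) -> (forall j, 0 <= l j) ->
  scaled_newton (fun b => S b /\ b <> a)
    (\sum_(j < k) l j - \sum_(j < k | s j == a) l j)
    (fun i => \sum_(j < k | s j != a) l j * (s j i)%:R) /\
  forall i, \sum_(j < k) l j * (s j i)%:R =
    (\sum_(j < k | s j == a) l j) * embedR a i +
    \sum_(j < k | s j != a) l j * (s j i)%:R.
Proof.
move=> Ss l_ge0; split.
  rewrite (bigID (fun j => s j == a)) /= addrAC subrr add0r.
  pose w j := if s j != a then l j else 0.
  have w_ge0 j : 0 <= w j by rewrite /w; case: ifP.
  have Nw j : w j != 0 -> newton (fun b => S b /\ b <> a) (embedR (s j)).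
    by rewrite /w; case: (s j =P a) => [_|sja _] /=; [rewrite eqxx | apply: newton_point].
  apply: scaled_newton_eq (scaled_newton_sum w_ge0 Nw) _ _ => [|i].
    by rewrite [RHS]big_mkcond.
  by rewrite [RHS]big_mkcond; apply: eq_bigr => j _; rewrite /w; case: ifP; rewrite ?mul0r.
move=> i; rewrite (bigID (fun j => s j == a)) /= mulr_suml.
by congr (_ + _); apply: eq_bigr => j /eqP ->.
Qed.

Lemma scaled_newton_split S c x a : scaled_newton S c x ->
  exists al z, 0 <= al /\ scaled_newton (fun b => S b /\ b <> a) (c - al) z /\
    forall i, al * embedR a i + z i <= x i.
Proof.
move=> [k [s [l [Ss [l_ge0 [<- le_x]]]]]].
have [Nrest decomp] := scaled_newton_split_at a Ss l_ge0.
exists (\sum_(j < k | s j == a) l j), (fun i => \sum_(j < k | s j != a) l j * (s j i)%:R).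
split; first exact: sumr_ge0.
by split=> // i; rewrite -decomp.
Qed.

Lemma extreme_newton_le S v p : extreme (newton S) v -> newton S p ->
  (forall i, p i <= v i) -> forall i, v i = p i.
Proof.
move=> [Nv v_ext] Np le_pv.
have Nq : newton S (fun i => 2 * v i - p i).
  by apply: scaled_newton_le Nv _ => i; have := le_pv i; lra.
have half_01 : 0 < (2^-1 : R) < 1 by lra.
have v_mid i : v i = 2^-1 * p i + (1 - 2^-1) * (2 * v i - p i) by lra.
by move=> i; have := v_ext _ _ _ Np Nq half_01 v_mid i; lra.
Qed.

Lemma extreme_newton_split S v x y t : extreme (newton S) v ->
  newton S x -> newton S y -> 0 < t < 1 ->
  (forall i, v i = t * x i + (1 - t) * y i) -> forall i, v i = x i.
Proof.
move=> [_ v_ext] Nx Ny t_01 v_mid i.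
by rewrite v_mid -(v_ext x y t Nx Ny t_01 v_mid i) mulrBl mul1r addrC subrK.
Qed.

Lemma extreme_newton_mass S v s t z : extreme (newton S) v -> S s -> 0 < t ->
  scaled_newton S (1 - t) z -> (forall i, t * embedR s i + z i <= v i) ->
  forall i, v i = embedR s i.
Proof.
move=> v_ext Ss t_gt0 Nz le_v; have Ns := newton_point Ss.
have t_le1 : t <= 1 by have := scaled_newton_weight_ge0 Nz; rewrite subr_ge0.
have [t1|t_neq1] := eqVneq t 1.
  apply: extreme_newton_le v_ext Ns _ => i; apply: le_trans (le_v i).
  by rewrite t1 mul1r lerDl (scaled_newton_ge0 Nz).
have t'_gt0 : 0 < 1 - t by rewrite subr_gt0 lt_neqAle t_neq1.
have Nw := scaled_newton_div t'_gt0 Nz.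
have t_01 : 0 < t < 1 by rewrite t_gt0 -subr_gt0.
have Np : newton S (fun i => t * embedR s i + (1 - t) * ((1 - t)^-1 * z i)).
  by apply: newton_convex Ns Nw _; rewrite ltW.
have v_mid : forall i, v i = t * embedR s i + (1 - t) * ((1 - t)^-1 * z i).
  apply: extreme_newton_le v_ext Np _ => i.
  by rewrite mulrA mulfV ?gt_eqF ?mul1r.
exact: extreme_newton_split v_ext Ns Nw t_01 v_mid.
Qed.

Lemma extreme_newton_in S v : extreme (newton S) v ->
  exists2 a, S a & forall i, v i = embedR a i.
Proof.
move=> v_ext; have [k [s [l [Ss [l_ge0 [l_sum le_v]]]]]] := v_ext.1.
have /existsP[j0 lj0_neq0] : [exists j, l j != 0].
  apply: contraT => /existsPn l_eq0; move: l_sum.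
  by rewrite big1 => [/eqP|j _]; [rewrite eq_sym oner_eq0 | apply/eqP/negPn/l_eq0].
set a := s j0.
have [Nrest decomp] := scaled_newton_split_at a Ss l_ge0.
rewrite l_sum in Nrest.
set al := \sum_(j < k | s j == a) l j in Nrest decomp.
have al_gt0 : 0 < al.
  apply: (@lt_le_trans _ _ (l j0)); first by rewrite lt_def lj0_neq0 l_ge0.
  by rewrite /al (bigD1 j0) ?eqxx //= lerDl sumr_ge0.
exists a; first exact: Ss.
apply: extreme_newton_mass v_ext (Ss j0) al_gt0 (scaled_newton_sub _ Nrest) _.
  by move=> b [].
by move=> i; rewrite -decomp.
Qed.

Lemma vert_sub S a : vert S a -> S a.
Proof. by case/extreme_newton_in => b Sb /embedR_inj ->. Qed.

Lemma extreme_sum_eq S v x y (n : nat) : extreme (newton S) v ->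
  newton S x -> scaled_newton S n%:R y -> (forall i, n.+1%:R * v i = x i + y i) ->
  forall i, v i = x i.
Proof.
move=> v_ext Nx Ny sum_eq.
have [n0 | n_gt0] := posnP n.
  apply: extreme_newton_le v_ext Nx _ => i.
  by rewrite -[v i]mul1r -[1]/(0.+1%:R) -n0 sum_eq lerDl (scaled_newton_ge0 Ny).
have nR_gt0 : (0 : R) < n%:R by rewrite ltr0n.
have t_01 : 0 < ((n%:R + 1)^-1 : R) < 1.
  by rewrite invr_gt0 invf_lt1 ?ltrDr ?addr_gt0.
apply: extreme_newton_split v_ext Nx (scaled_newton_div nR_gt0 Ny) t_01 _ => i.
have -> : v i = (n%:R + 1)^-1 * (x i + y i).
  by rewrite -sum_eq mulrSr mulKf // gt_eqF ?addr_gt0.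
by field; rewrite !gt_eqF ?addr_gt0.
Qed.

End ExtremePoints.

Section Dickson.
Variable m : nat.
Local Open Scope nat_scope.

Definition finitely_based (S : mexp m -> Prop) : Prop :=
  exists2 L : seq (mexp m), (forall l, l \in L -> S l) &
    forall s, S s -> exists2 l, l \in L & forall i, l i <= s i.

Lemma finitely_based_bigcup (I : finType) (P : I -> mexp m -> Prop) :
  (forall x, finitely_based (P x)) -> finitely_based (fun s => exists x, P x s).
Proof.
move=> Pbased.
suff [L LP Lmin] : finitely_based (fun s => exists2 x, x \in enum I & P x s).
  exists L => [l /LP[x _ Pxl] | s [x Pxs]]; first by exists x.
  by apply: Lmin; exists x; rewrite ?mem_enum.
elim: (enum I) => [|x r [L LP Lmin]]; first by exists [::] => // s [x].
have [Lx LxP Lxmin] := Pbased x.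
exists (Lx ++ L) => [l | s [y]].
  rewrite mem_cat => /orP[/LxP Pxl | /LP[y yr Pyl]]; first by exists x; rewrite ?mem_head.
  by exists y; rewrite // in_cons yr orbT.
rewrite in_cons => /predU1P[-> /Lxmin[l Ll le_ls] | yr Pys].
  by exists l; rewrite // mem_cat Ll.
have [l Ll le_ls] := Lmin s (ex_intro2 _ _ y yr Pys).
by exists l; rewrite // mem_cat Ll orbT.
Qed.

(* Induction on [#|J|]: an element of [S] not above a fixed [s0] lies below
   [s0] in some coordinate [j] of [J]; each of the finitely many choices of
   [j] and of that value removes [j] from [J]. *)
Lemma finitely_based_pinned (J : {set 'I_m}) (S : mexp m -> Prop) :
  (forall s t, S s -> S t -> forall i, i \notin J -> s i = t i) ->
  finitely_based S.
Proof.
move: {2}#|J| (erefl #|J|) => n.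
elim/ltn_ind: n J S => n IHn J S cardJ pinned.
have [[s0 Ss0] | noS] := classic (exists s0, S s0); last first.
  by exists [::] => // s Ss; case: noS; exists s.
pose B := (\max_(i < m) s0 i).+1.
pose below (jc : 'I_m * 'I_B) s := [/\ S s, jc.1 \in J & s jc.1 = jc.2].
have below_based jc : finitely_based (below jc).
  case: jc => j c; have [jJ | /negP jNJ] := boolP (j \in J); last first.
    by exists [::] => // s [].
  have ltJ : #|J :\ j| < n by rewrite -cardJ (cardsD1 j J) jJ.
  apply: (IHn _ ltJ (J :\ j)) => // s t [Ss _ sj] [St _ tj] i.
  rewrite in_setD1 negb_and negbK => /orP[/eqP -> | iNJ]; first by rewrite sj tj.
  exact: pinned.
have [L LP Lmin] := finitely_based_bigcup below_based.
exists (s0 :: L) => [l | s Ss].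
  by rewrite in_cons => /predU1P[-> // | /LP[jc []]].
have [s0_le | /forallPn[j]] := boolP [forall i, s0 i <= s i].
  by exists s0; [rewrite mem_head | apply/forallP].
rewrite -ltnNge => lt_sj.
have jJ : j \in J.
  by apply: contraLR lt_sj => /(pinned _ _ Ss Ss0) ->; rewrite ltnn.
have sj_lt : s j < B by rewrite ltnS (leq_trans (ltnW lt_sj)) ?leq_bigmax.
have [l Ll le_ls] := Lmin s (ex_intro _ (j, Ordinal sj_lt) (And3 Ss jJ erefl)).
by exists l; rewrite // in_cons Ll orbT.
Qed.

Lemma dickson (S : mexp m -> Prop) : finitely_based S.
Proof. by apply: (@finitely_based_pinned setT) => s t _ _ i; rewrite in_setT. Qed.

End Dickson.

Lemma convex_ge_eq (F : realFieldType) (t u x y : F) : 0 < t < 1 ->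
  u <= x -> u <= y -> t * x + (1 - t) * y <= u -> x = u /\ y = u.
Proof.
move=> /andP[t_gt0 t_lt1] le_ux le_uy le_mid.
have dx_ge0 : 0 <= t * (x - u) by rewrite mulr_ge0 ?subr_ge0 // ltW.
have dy_ge0 : 0 <= (1 - t) * (y - u) by rewrite mulr_ge0 ?subr_ge0 // ltW.
have t'_gt0 : 0 < 1 - t by rewrite subr_gt0.
have /eqP : t * (x - u) = 0 by lra.
have /eqP : (1 - t) * (y - u) = 0 by lra.
by rewrite !mulf_eq0 (gt_eqF t_gt0) (gt_eqF t'_gt0) !subr_eq0 /= => /eqP -> /eqP ->.
Qed.

Section FinitePointSets.
Variable m : nat.
Implicit Types (S T : mexp m -> Prop) (L : seq (mexp m)) (l : mexp m).

Lemma vert_newton_eq S T : newton S = newton T -> vert S = vert T.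
Proof. by rewrite /vert => ->. Qed.

Lemma newton_remove_nonvertex L l : l \in L -> ~ vert (fun a => a \in L) l ->
  newton (fun a => a \in filter (predC1 l) L) (embedR l).
Proof.
move=> Ll l_nvert; apply: NNPP => Nl_not; apply: l_nvert.
split=> [|x y t Nx Ny t_01 l_mid i0]; first exact: newton_point.
apply: NNPP => xy_neq; apply: Nl_not; have /andP[t_gt0 t_lt1] := t_01.
have [a1 [z1 [a1_ge0 [Nz1 le_x]]]] := scaled_newton_split l Nx.
have [a2 [z2 [a2_ge0 [Nz2 le_y]]]] := scaled_newton_split l Ny.
have a1_le1 : a1 <= 1 by have := scaled_newton_weight_ge0 Nz1; rewrite subr_ge0.
have a2_le1 : a2 <= 1 by have := scaled_newton_weight_ge0 Nz2; rewrite subr_ge0.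
have t'_ge0 : 0 <= 1 - t by rewrite subr_ge0 ltW.
set mu := t * a1 + (1 - t) * a2.
set w := fun i => t * z1 i + (1 - t) * z2 i.
have Nw : scaled_newton (fun b => b \in L /\ b <> l) (1 - mu) w.
  have := scaled_newton_add (scaled_newton_scale (ltW t_gt0) Nz1)
    (scaled_newton_scale t'_ge0 Nz2).
  by move/scaled_newton_eq; apply=> //; rewrite /mu; ring.
have le_l i : mu * embedR l i + w i <= embedR l i.
  have := ler_wpM2l (ltW t_gt0) (le_x i); have := ler_wpM2l t'_ge0 (le_y i).
  have := l_mid i; rewrite /mu /w; lra.
have mu_le1 : mu <= 1.
  have := ler_wpM2l (ltW t_gt0) a1_le1; have := ler_wpM2l t'_ge0 a2_le1.
  by rewrite /mu; lra.
have mu_lt1 : mu < 1.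
  rewrite lt_neqAle mu_le1 andbT; apply/eqP => mu1; apply: xy_neq.
  have [a1_1 a2_1] : 1 - a1 = 0 /\ 1 - a2 = 0.
    by apply: convex_ge_eq t_01 _ _ _; rewrite ?subr_ge0 //; move: mu1; rewrite /mu; lra.
  have le_lx : embedR l i0 <= x i0.
    apply: le_trans (le_x i0); have -> : a1 = 1 by lra.
    by rewrite mul1r lerDl (scaled_newton_ge0 Nz1).
  have le_ly : embedR l i0 <= y i0.
    apply: le_trans (le_y i0); have -> : a2 = 1 by lra.
    by rewrite mul1r lerDl (scaled_newton_ge0 Nz2).
  have le_mid : t * x i0 + (1 - t) * y i0 <= embedR l i0 by rewrite -l_mid.
  by have [-> ->] := convex_ge_eq t_01 le_lx le_ly le_mid.
apply: (scaled_newton_sub _ (scaled_newton_absorb mu_lt1 Nw le_l)).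
by move=> b [Lb /eqP b_neq]; rewrite mem_filter /= b_neq.
Qed.

Lemma newton_vert_finite L x :
  newton (fun a => a \in L) x -> newton (vert (fun a => a \in L)) x.
Proof.
move: {2}(size L) (erefl (size L)) => n.
elim/ltn_ind: n L x => n IHn L x sizeL.
have [[l Ll l_nvert] | all_vert] :=
  classic (exists2 l, l \in L & ~ vert (fun a => a \in L) l); last first.
  apply: scaled_newton_closure => a La; apply: newton_point.
  by apply: NNPP => a_nvert; apply: all_vert; exists a.
set L' := filter (predC1 l) L.
have Nl := newton_remove_nonvertex Ll l_nvert.
have eqN : newton (fun a => a \in L) = newton (fun a => a \in L').
  apply: pred_ext => y; split; last first.
    by apply: scaled_newton_sub => a; rewrite mem_filter => /andP[].
  apply: scaled_newton_closure => a La; have [-> // | a_neq] := eqVneq a l.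
  by apply: newton_point; rewrite mem_filter /= a_neq.
have ltL : (size L' < n)%nat.
  rewrite /L' size_filter -sizeL -(count_predC (pred1 l)).
  by rewrite -[count (predC1 l) L]add0n ltn_add2r -has_count has_pred1.
by rewrite eqN (vert_newton_eq eqN); apply: (IHn _ ltL).
Qed.

Lemma newton_vert S : newton (vert S) = newton S.
Proof.
have [L LS Lmin] := dickson S.
have eqN : newton (fun a => a \in L) = newton S.
  apply: pred_ext => x; split; first exact: scaled_newton_sub.
  apply: scaled_newton_closure => a /Lmin[l Ll le_la].
  by apply: scaled_newton_le (newton_point Ll) _ => i; rewrite ler_nat.
apply: pred_ext => x; split; first exact: scaled_newton_sub (@vert_sub _ S).
by rewrite -eqN -(vert_newton_eq eqN); apply: newton_vert_finite.
Qed.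

Lemma vert_mem_base S L v : (forall l, l \in L -> S l) ->
  (forall s, S s -> exists2 l, l \in L & forall i, (l i <= s i)%nat) ->
  vert S v -> v \in L.
Proof.
move=> LS Lmin v_vert; have [l Ll le_lv] := Lmin v (vert_sub v_vert).
suff -> : v = l by [].
apply: embedR_inj; apply: extreme_newton_le v_vert (newton_point (LS l Ll)) _ => i.
by rewrite ler_nat.
Qed.

Lemma vert_vert S : vert (vert S) = vert S.
Proof. exact: vert_newton_eq (newton_vert S). Qed.

End FinitePointSets.

Section Dilation.
Variable m : nat.
Implicit Types (S T : mexp m -> Prop) (v w : mexp m).

Definition mscale (n : nat) v : mexp m := [ffun i => (n * v i)%nat].

Lemma embedR_mscale n v i : embedR (mscale n v) i = n%:R * embedR v i.
Proof. by rewrite /embedR ffunE natrM. Qed.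

Lemma scaled_newton_vert_sub S T n x : (0 < n)%nat ->
  (forall v, vert S v -> T (mscale n v)) -> scaled_newton S n%:R x -> newton T x.
Proof.
move=> n_gt0 Tv Nx; have nR_gt0 : (0 : R) < n%:R by rewrite ltr0n.
have := scaled_newton_div nR_gt0 Nx; rewrite -newton_vert.
case=> k [s [l [Vs [l_ge0 [l_sum le_x]]]]].
exists k, (fun j => mscale n (s j)), l; split=> [j|]; first exact: Tv.
do 2 split=> //; move=> i; rewrite -[x i](mulVKf (lt0r_neq0 nR_gt0)).
apply: le_trans (ler_wpM2l (ltW nR_gt0) (le_x i)).
by rewrite mulr_sumr; apply: ler_sum => j _; rewrite ffunE natrM mulrCA.
Qed.

Lemma vert_dilate S T n w : (0 < n)%nat ->
  (forall a, T a -> scaled_newton S n%:R (embedR a)) ->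
  (forall v, vert S v -> T (mscale n v)) ->
  vert T w -> exists2 v, vert S v & w = mscale n v.
Proof.
move=> n_gt0 NT Tv w_vert; have nR_gt0 : (0 : R) < n%:R by rewrite ltr0n.
have nR_neq0 : (n%:R : R) != 0 by rewrite gt_eqF.
set y := fun i => n%:R^-1 * embedR w i.
have y_ext : extreme (newton S) y.
  split=> [|a b t Na Nb t_01 y_mid i]; first exact: scaled_newton_div (NT _ (vert_sub w_vert)).
  have dilate c : newton S c -> newton T (fun i => n%:R * c i).
    move=> Nc; apply: scaled_newton_vert_sub n_gt0 Tv _.
    by apply: scaled_newton_eq (scaled_newton_scale (ltW nR_gt0) Nc) _ _; rewrite ?mulr1.
  apply: (mulfI nR_neq0); apply: w_vert.2 (dilate _ Na) (dilate _ Nb) t_01 _ i => j.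
  have -> : embedR w j = n%:R * y j by rewrite /y mulVKf.
  by rewrite y_mid; ring.
have [v Sv y_eq] := extreme_newton_in y_ext.
have -> : w = mscale n v.
  by apply: embedR_inj => i; rewrite embedR_mscale -y_eq /y mulVKf.
exists v => //; rewrite /vert.
by have <- : y = embedR v by apply: functional_extensionality.
Qed.

End Dilation.

Section TropicalOrder.
Variable m : nat.
Implicit Types A B : mexp m -> Prop.

Lemma VBmul1r A : VBmul A (@VB1 m) = vert A.
Proof.
rewrite /VBmul; congr vert; apply: pred_ext => a; split=> [[b [c [Ab [-> ->]]]] | Aa].
  by have -> : [ffun i => (b i + mexp0 m i)%nat] = b by apply/ffunP => i; rewrite !ffunE addn0.
by exists a, (mexp0 m); do 2 split=> //; apply/ffunP => i; rewrite !ffunE addn0.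
Qed.

Lemma VBmul1l A : VBmul (@VB1 m) A = vert A.
Proof.
rewrite /VBmul; congr vert; apply: pred_ext => a; split=> [[b [c [-> [Ac ->]]]] | Aa].
  by have -> : [ffun i => (mexp0 m i + c i)%nat] = c by apply/ffunP => i; rewrite !ffunE.
by exists (mexp0 m), a; do 2 split=> //; apply/ffunP => i; rewrite !ffunE.
Qed.

Lemma VBadd_vert A B : VBadd (vert A) (vert B) = vert (fun a => A a \/ B a).
Proof.
apply: vert_newton_eq; apply: pred_ext => x; split.
  by apply: scaled_newton_sub => a [/vert_sub Aa | /vert_sub Ba]; [left | right].
apply: scaled_newton_closure => a [Aa | Ba].
  apply: scaled_newton_sub (_ : newton (vert A) _) => [b|]; first by left.
  by rewrite newton_vert; apply: newton_point.
apply: scaled_newton_sub (_ : newton (vert B) _) => [b|]; first by right.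
by rewrite newton_vert; apply: newton_point.
Qed.

Lemma VBle_vertP A B :
  VBle (vert A) (vert B) <-> forall a, A a -> newton B (embedR a).
Proof.
rewrite /VBle VBadd_vert; split=> [/pred_ext eqAB a Aa | NA].
  by rewrite -newton_vert -eqAB newton_vert; apply: newton_point; left.
have eqN : newton (fun a => A a \/ B a) = newton B.
  apply: pred_ext => x; split; last by apply: scaled_newton_sub => a; right.
  by apply: scaled_newton_closure => a [/NA | /newton_point].
by move=> a; rewrite (vert_newton_eq eqN).
Qed.

Variable K : fieldType.
Implicit Types f g : pseries K m.

Lemma trop_frac_le1P f g : VBfrac_le (trop f) (trop g) (@VB1 m) (@VB1 m) <->
  forall a, Supp f a -> newton (Supp g) (embedR a).
Proof. by rewrite /VBfrac_le !VBmul1r /trop !vert_vert VBle_vertP. Qed.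

Lemma trop_frac_ll1P f g : VBfrac_ll (trop f) (trop g) (@VB1 m) (@VB1 m) <->
  (forall a, Supp f a -> newton (Supp g) (embedR a)) /\
  (forall w, ~ (trop f w /\ trop g w)).
Proof.
rewrite /VBfrac_ll trop_frac_le1P /VBll VBmul1r VBmul1l /trop !vert_vert.
by rewrite VBle_vertP; split=> [[? []] | [? ?]].
Qed.

End TropicalOrder.

Section PowerSeriesProducts.
Variables (K : fieldType) (m : nat).
Implicit Types (S : mexp m -> Prop) (f g h : pseries K m) (a b c v : mexp m).

Definition supp_in_newton S h : Prop := forall b, Supp h b -> newton S (embedR b).

Lemma supp_in_newton_subsc S f g (k : K) : supp_in_newton S f ->
  supp_in_newton S g -> supp_in_newton S (ps_subsc f g k).
Proof.
move=> Sf Sg b; rewrite /Supp /ps_subsc.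
have [f0 | /eqP fb _] := eqVneq (f b) 0; last exact: Sf.
have [g0 | /eqP gb _] := eqVneq (g b) 0; last exact: Sg.
by rewrite f0 g0 mulr0 subrr.
Qed.

Lemma ps_mul_supp f g a : Supp (ps_mul f g) a ->
  exists b c, [/\ Supp f b, Supp g c & forall i, a i = (b i + c i)%nat].
Proof.
move=> fg_a; apply: NNPP => no_split; apply: fg_a; rewrite /ps_mul big1 // => B le_Ba.
apply/eqP; apply: contraT; rewrite mulf_eq0 negb_or => /andP[/eqP fB /eqP gB].
case: no_split; exists [ffun i => nat_of_ord (B i)], [ffun i => (a i - B i)%nat].
by split=> // i; rewrite !ffunE subnKC //; move/forallP: le_Ba.
Qed.

Lemma ps_mul_single f g a b c : (forall i, a i = (b i + c i)%nat) ->
  (forall b' c', Supp f b' -> Supp g c' -> (forall i, a i = (b' i + c' i)%nat) -> b' = b) ->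
  ps_mul f g a = f b * g c.
Proof.
move=> a_eq uniq_split; rewrite /ps_mul.
have b_lt i : (b i < (\max_(i < m) a i).+1)%nat.
  by rewrite ltnS (leq_trans _ (leq_bigmax i)) // a_eq leq_addr.
pose B0 : {ffun 'I_m -> 'I_(\max_(i < m) a i).+1} := [ffun i => Ordinal (b_lt i)].
rewrite (bigD1 B0) /=; last by apply/forallP => i; rewrite ffunE /= a_eq leq_addr.
rewrite [X in _ + X]big1 ?addr0 => [|B /andP[le_Ba B_neq]].
  by congr (f _ * g _); apply/ffunP => i; rewrite !ffunE //= a_eq addKn.
have [fB | /eqP fB] := eqVneq (f [ffun i => nat_of_ord (B i)]) 0; first by rewrite fB mul0r.
have [gB | /eqP gB] := eqVneq (g [ffun i => (a i - B i)%nat]) 0; first by rewrite gB mulr0.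
case/eqP: B_neq; apply/ffunP => i; apply: val_inj; rewrite ffunE /=.
have := congr1 (fun d : mexp m => d i) (uniq_split _ _ fB gB _); rewrite ffunE; apply.
by move=> j; rewrite !ffunE subnKC //; move/forallP: le_Ba.
Qed.

Lemma ps_prod_supp S hs : List.Forall (supp_in_newton S) hs ->
  forall a, Supp (ps_prod hs) a -> scaled_newton S (size hs)%:R (embedR a).
Proof.
elim: hs => [_ a | h hs IHhs /List.Forall_cons_iff[Sh Shs] a].
  rewrite /Supp /ps_prod /ps_one /=; case: eqP => [-> _ | _]; last by case.
  by apply: scaled_newton_orthant => i; rewrite /embedR ffunE.
case/ps_mul_supp => b [c [hb pc a_eq]].
apply: scaled_newton_eq (scaled_newton_add (Sh b hb) (IHhs Shs c pc)) _ _.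
  by rewrite /= mulrS.
by move=> i; rewrite /embedR a_eq natrD.
Qed.

Lemma ps_prod_vertex S hs v : List.Forall (supp_in_newton S) hs ->
  extreme (newton S) (embedR v) ->
  ps_prod hs (mscale (size hs) v) = \prod_(h <- hs) h v.
Proof.
move=> + v_ext; elim: hs => [_ | h hs IHhs /List.Forall_cons_iff[Sh Shs]].
  have -> : mscale 0 v = mexp0 m by apply/ffunP => i; rewrite !ffunE.
  by rewrite big_nil /ps_prod /ps_one /= eqxx.
rewrite big_cons -(IHhs Shs) /=.
apply: ps_mul_single => [i | b c hb pc a_eq]; first by rewrite !ffunE mulSn.
apply: embedR_inj => i; apply: esym.
apply: (extreme_sum_eq v_ext (Sh b hb) (ps_prod_supp Shs pc)) => j.
by rewrite /embedR -natrM -natrD -a_eq ffunE.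
Qed.

Lemma Forall_supp_subsc S f g n (alpha : 'I_n -> K) :
  supp_in_newton S f -> supp_in_newton S g ->
  List.Forall (supp_in_newton S) [seq ps_subsc f g (alpha k) | k <- enum 'I_n].
Proof.
by move=> Sf Sg; apply/List.Forall_map/List.Forall_forall => k _; apply: supp_in_newton_subsc.
Qed.

Lemma Forall_supp_nseq g n : List.Forall (supp_in_newton (Supp g)) (nseq n g).
Proof. by elim: n => //= n IHn; constructor=> // b; apply: newton_point. Qed.

Lemma ps_prod_subsc_vertex S f g n (alpha : 'I_n -> K) v :
  supp_in_newton S f -> supp_in_newton S g -> vert S v ->
  (exists k, f v = alpha k * g v) ->
  ps_prod [seq ps_subsc f g (alpha k) | k <- enum 'I_n] (mscale n v) = 0.
Proof.
move=> Sf Sg v_vert [k fv_eq].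
have := ps_prod_vertex (Forall_supp_subsc alpha Sf Sg) v_vert.
rewrite size_map size_enum_ord => ->; apply/eqP.
rewrite prodf_seq_eq0 has_map; apply/hasP; exists k; first by rewrite mem_enum.
by rewrite /= /ps_subsc fv_eq subrr.
Qed.

Lemma ps_prod_nseq_vertex g n v :
  vert (Supp g) v -> Supp (ps_prod (nseq n g)) (mscale n v).
Proof.
move=> gv; rewrite /Supp; have := ps_prod_vertex (Forall_supp_nseq g n) gv.
rewrite size_nseq => ->; apply/eqP; rewrite prodf_seq_neq0 all_nseq /=.
by apply/orP; right; apply/eqP; apply: vert_sub gv.
Qed.

Lemma trop_frac_ll1_dilate S f g n : (0 < n)%nat ->
  (forall a, Supp f a -> scaled_newton S n%:R (embedR a)) ->
  (forall a, Supp g a -> scaled_newton S n%:R (embedR a)) ->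
  (forall v, vert S v -> Supp g (mscale n v) /\ ~ Supp f (mscale n v)) ->
  VBfrac_ll (trop f) (trop g) (@VB1 m) (@VB1 m).
Proof.
move=> n_gt0 Nf Ng fg_vert.
have g_vert v : vert S v -> Supp g (mscale n v) by case/fg_vert.
apply/trop_frac_ll1P; split=> [a /Nf | w [/vert_sub fw gw]].
  exact: scaled_newton_vert_sub n_gt0 g_vert.
have [v Sv w_eq] := vert_dilate n_gt0 Ng g_vert gw.
by have [_] := fg_vert v Sv; rewrite -w_eq.
Qed.

End PowerSeriesProducts.

Theorem lemma4p8 (K : fieldType) (m : nat) (HK : [pchar K]%R =i pred0)
  (f g : pseries K m) (Hg : exists a, g a != 0%R)
  (Hq : VBfrac_le (trop f) (trop g) (@VB1 m) (@VB1 m)) :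
  exists n : nat, (1 <= n)%N /\ exists alpha : 'I_n -> K,
    VBfrac_ll (trop (ps_prod [seq ps_subsc f g (alpha k) | k <- enum 'I_n]))
              (trop (ps_prod (nseq n g))) (@VB1 m) (@VB1 m).
Proof.
have /trop_frac_le1P supp_f := Hq.
have supp_g : supp_in_newton (Supp g) g by move=> b; apply: newton_point.
have [L LS Lmin] := dickson (Supp g).
pose n := size L; pose alpha (k : 'I_n) := f (nth (mexp0 m) L k) / g (nth (mexp0 m) L k).
have n_gt0 : (0 < n)%N by case: Hg => a /eqP /Lmin[l]; rewrite /n; case: (L).
exists n; split=> //; exists alpha.
apply: (trop_frac_ll1_dilate (S := Supp g) n_gt0) => [a | a | v gv].
- move/(ps_prod_supp (Forall_supp_subsc alpha supp_f supp_g)).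
  by rewrite size_map size_enum_ord.
- by move/(ps_prod_supp (Forall_supp_nseq g n)); rewrite size_nseq.
- split; first exact: ps_prod_nseq_vertex.
  rewrite /Supp (ps_prod_subsc_vertex supp_f supp_g gv) //.
  have vL := vert_mem_base LS Lmin gv.
  exists (Ordinal (etrans (index_mem v L) vL)).
  by rewrite /alpha /= nth_index // divfK //; apply/eqP; apply: vert_sub gv.
Qed.
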